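(* Let $n\ge 1$ be an integer and $p\ge 3$ a prime. Let $S\subset(\mathbb{Z}_{\ge 0})^n\setminus\{0\}$ be a finite set with $|S|\le \frac12 p^n-1$ such that for every $\alpha=(\alpha_1,\dots,\alpha_n)\in S$ some coordinate $\alpha_i$ is not divisible by $p$. Let $r=\sqrt{\frac14(n-1)+\left(\frac{p-2}{2p}\right)^2}$. Then every multivariate trigonometric polynomial with spectrum $S$, i.e. every function $f\colon (S^1)^n\to\mathbb{R}$ of the form $$f(t_1,\dots,t_n)=\sum_{\alpha\in S}\Big(a_\alpha\cos\big(2\pi\textstyle\sum_i\alpha_it_i\big)+b_\alpha\sin\big(2\pi\textstyle\sum_i\alpha_it_i\big)\Big),\qquad a_\alpha,b_\alpha\in\mathbb{R},$$ has a zero on every closed geodesic ball of radius $r$ in $(S^1)^n$.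
   Context: $S^1=[0,1]/(0\sim1)$, and the torus $(S^1)^n$ is obtained from the cube $[0,1]^n$ by gluing opposite facets without a twist; it carries the quotient ($\ell_2$) metric inherited from the Euclidean metric on $[0,1]^n$, i.e. $\mathrm{dist}(s,t)=\big(\sum_i \min(|s_i-t_i|,1-|s_i-t_i|)^2\big)^{1/2}$ for representatives in $[0,1)$. A closed geodesic ball of radius $r$ is a set $\{y:\mathrm{dist}(x,y)\le r\}$. *)

From HB Require Import structures.
From mathcomp Require Import all_boot all_order all_algebra.
From mathcomp Require Import reals trigo.
Set Implicit Arguments. Unset Strict Implicit. Unset Printing Implicit Defensive.
Import Order.TTheory GRing.Theory Num.Theory.
Local Open Scope ring_scope.

(* Points of the torus (S^1)^n are represented by their representatives in
   [0,1)^n. *)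
Definition in_fund_domain (R : realType) (n : nat) (t : 'I_n -> R) : Prop :=
  forall i, 0 <= t i /\ t i < 1.

(* Quotient l2 metric on the torus (S^1)^n = [0,1]^n / ~ *)
Definition torus_dist (R : realType) (n : nat) (s t : 'I_n -> R) : R :=
  Num.sqrt (\sum_(i < n)
    (Num.min `|s i - t i| (1 - `|s i - t i|)) ^+ 2).

Definition trig_poly (R : realType) (n : nat) (S : seq (n.-tuple nat))
    (a b : n.-tuple nat -> R) (t : 'I_n -> R) : R :=
  \sum_(alpha <- S)
    (a alpha * cos (2 * pi * \sum_(i < n) (tnth alpha i)%:R * t i)
     + b alpha * sin (2 * pi * \sum_(i < n) (tnth alpha i)%:R * t i)).

From HB Require Import structures.
From mathcomp Require Import all_boot all_order all_algebra.
From mathcomp Require Import reals trigo.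
From mathcomp Require Import zify ring lra.
From mathcomp Require Import boolp topology normedtype.
Import Order.TTheory GRing.Theory Num.Theory numFieldNormedType.Exports.

Set Implicit Arguments.
Unset Strict Implicit.
Unset Printing Implicit Defensive.

(** Let z be the antipode x + (1/2, ..., 1/2) of x and consider the grid z + k/p,
    k in {0, ..., p-1}^n.  If some coordinate of an integer vector beta is prime to
    p, the sums over the grid of cos (t + 2 pi beta.k/p) and sin (t + 2 pi beta.k/p)
    vanish: shifting one coordinate of k rotates the pair of sums by the angle
    2 pi beta_i/p, which is not a multiple of 2 pi.  Since |S| <= p^n/2 - 1, counting
    gives gamma such that gamma, alpha + gamma and alpha - gamma all have a coordinate
    prime to p for every alpha in S; by the product-to-sum formula the average of f
    over the grid with the weights 1 - cos (2 pi gamma.k/p) is then 0.  These weights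
    are nonnegative, vanish at k = 0 and are not all zero, so f takes a value >= 0
    and a value <= 0 at grid points k <> 0, and each of these has a coordinate k_i/p
    in [1/p, 1 - 1/p].  For each i the points u of [0,1]^n with u_i in that range form
    a box, two such boxes meet, and the intermediate value theorem on two segments
    yields a zero z + u of f of the same kind.  On the circle x_i + 1/2 + u_i is then
    within 1/2 - 1/p of x_i and every other coordinate within 1/2, whence the radius. *)

Lemma exists_notin (T : finType) (s : seq T) : (size s < #|T|)%N -> exists x, x \notin s.
Proof.
move=> s_lt; have [x|all_s] := pickP [predC s]; first by exists x.
suff : (#|T| <= size s)%N by rewrite leqNgt s_lt.
apply: leq_trans (card_size s); apply: subset_leq_card; apply/subsetP => x _.
by move: (all_s x) => /= /negbFE.
Qed.

Lemma exists_ffun_neq {aT : finType} {rT : eqType} (f g : {ffun aT -> rT}) :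
  f != g -> exists i, f i != g i.
Proof.
move=> /eqP fg; have [i|eq_fg] := pickP (fun i => f i != g i); first by exists i.
by case: fg; apply/ffunP => i; apply/eqP/negbFE/eq_fg.
Qed.

Lemma dvdn_addr_eq_opp_mod p a g : (g < p)%N -> (p %| a + g)%N -> g = (p - a %% p) %% p.
Proof.
move=> g_lt; have p_gt0 : (0 < p)%N by lia.
rewrite /dvdn -modnDml -/(dvdn _ _); have : (a %% p < p)%N by rewrite ltn_pmod.
move: (a %% p) => r r_lt /dvdnP [q hq].
case: r r_lt hq => [|r] r_lt hq; first by rewrite subn0 modnn; case: q hq => [|q] hq; lia.
have q1 : q = 1%N by case: q hq => [|[|q]] hq; lia.
rewrite modn_small; lia.
Qed.

Lemma exists_avoiding_shift n p (S : seq (n.-tuple nat)) :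
  (1 < p)%N -> (2 * size S + 2 <= p ^ n)%N ->
  exists gamma : 'I_n -> int, (exists i, ~~ (p%:Z %| gamma i)%Z) /\
    forall al, al \in S ->
      (exists i, ~~ (p%:Z %| ((tnth al i)%:Z + gamma i)%R)%Z) /\
      (exists i, ~~ (p%:Z %| ((tnth al i)%:Z - gamma i)%R)%Z).
Proof.
move=> p_gt1 S_small; have p_gt0 : (0 < p)%N by lia.
pose zero : {ffun 'I_n -> 'I_p} := [ffun => Ordinal p_gt0].
pose res al : {ffun 'I_n -> 'I_p} := [ffun j => Ordinal (ltn_pmod (tnth al j) p_gt0)].
pose opp_res al : {ffun 'I_n -> 'I_p} :=
  [ffun j => Ordinal (ltn_pmod (p - tnth al j %% p) p_gt0)].
have [g] : exists g, g \notin zero :: map res S ++ map opp_res S.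
  by apply: exists_notin; rewrite card_ffun !card_ord /= size_cat !size_map; lia.
rewrite in_cons mem_cat !negb_or => /and3P [g_zero g_res g_opp].
exists (fun j => Posz (g j)); split => [|al al_S]; last split.
- have /exists_ffun_neq [i gi] := g_zero; exists i; apply: contra gi => /= p_dvd.
  by rewrite ffunE; apply/eqP/val_inj/eqP; rewrite /= -(modn_small (ltn_ord (g i))).
- have /exists_ffun_neq [i gi] : g != opp_res al.
    by apply: contra g_opp => /eqP ->; apply: map_f.
  exists i; apply: contra gi; rewrite -PoszD => p_dvd.
  by apply/eqP/val_inj; rewrite /opp_res ffunE /=; apply: dvdn_addr_eq_opp_mod.
- have /exists_ffun_neq [i gi] : g != res al.
    by apply: contra g_res => /eqP ->; apply: map_f.
  exists i; apply: contra gi.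
  rewrite -eqz_mod_dvd !modz_nat eqz_nat (modn_small (ltn_ord (g i))) => /eqP gE.
  by apply/eqP/val_inj; rewrite /res ffunE.
Qed.

Local Open Scope ring_scope.

Lemma periodicz (U V : zmodType) (f : U -> V) (T : U) :
  periodic f T -> forall (m : int) (a : U), f (a + T *~ m) = f a.
Proof.
move=> fT [] k a; first by rewrite -pmulrn periodicn.
by rewrite NegzE mulrNz -pmulrn -(periodicn fT k.+1) subrK.
Qed.

Section Trigonometry.
Context {R : realType}.

Lemma cosDz (m : int) (x : R) : cos (x + m%:~R * (2 * pi)) = cos x.
Proof. by rewrite mulrzl mulr_natl; apply: periodicz; exact: cosD2pi. Qed.

Lemma sinDz (m : int) (x : R) : sin (x + m%:~R * (2 * pi)) = sin x.
Proof. by rewrite mulrzl mulr_natl; apply: periodicz; exact: sinD2pi. Qed.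

Lemma cos_2pi_frac_neq1 (p : nat) (beta : int) : (0 < p)%N ->
  ~~ (p%:Z %| beta)%Z -> cos (2 * pi * beta%:~R / p%:R) != 1 :> R.
Proof.
move=> p_gt0 p_ndvd.
have pR : 0 < p%:R :> R by rewrite ltr0n.
set r := (beta %% p)%Z.
have r_gt0 : 0 < r%:~R :> R.
  rewrite ltr0z lt_def modz_ge0 ?andbT ?eqz_nat -?lt0n //.
  by apply: contra p_ndvd => /eqP /dvdz_mod0P.
have r_ltp : r%:~R < p%:R :> R by rewrite pmulrn ltr_int ltz_pmod ?ltz_nat.
have -> : 2 * pi * beta%:~R / p%:R = pi * r%:~R / p%:R + pi * r%:~R / p%:R
                                    + (beta %/ p)%Z%:~R * (2 * pi) :> R.
  by rewrite {1}(divz_eq beta p) intrD intrM; field; rewrite gt_eqF.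
rewrite cosDz cosD; set t := pi * r%:~R / p%:R.
have sin_t : 0 < sin t.
  apply: sin_gt0_pi; rewrite divr_gt0 ?mulr_gt0 ?pi_gt0 //=.
  by rewrite ltr_pdivrMr // ltr_pM2l ?pi_gt0.
have := cos2Dsin2 t; rewrite !expr2 => h; apply/eqP => e; nra.
Qed.

Lemma rotation_fixed_eq0 (c s u v : R) : c ^+ 2 + s ^+ 2 = 1 -> c != 1 ->
  u = u * c - v * s -> v = v * c + u * s -> u = 0 /\ v = 0.
Proof.
move=> cs c1 hu hv.
have c2 : 2 - 2 * c != 0 by apply: contra c1 => /eqP h; apply/eqP; lra.
have hu' : (2 - 2 * c) * u = 0 by nra.
have hv' : (2 - 2 * c) * v = 0 by nra.
by move: hu' hv' => /eqP; rewrite mulf_eq0 (negbTE c2) => /eqP -> /eqP;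
  rewrite mulf_eq0 (negbTE c2) => /eqP ->.
Qed.

End Trigonometry.

Section Phase.
Variables (R : realType) (n p : nat).
Hypothesis p_gt1 : (1 < p)%N.

Definition phase (beta : 'I_n -> int) (k : {ffun 'I_n -> 'I_p}) : R :=
  2 * pi * \sum_(j < n) (beta j)%:~R * ((k j)%:R / p%:R).

Lemma phaseD beta beta' k :
  phase (fun j => beta j + beta' j) k = phase beta k + phase beta' k.
Proof.
by rewrite /phase -mulrDr -big_split; congr (_ * _); apply: eq_bigr => j _; rewrite intrD mulrDl.
Qed.

Lemma phaseB beta beta' k :
  phase (fun j => beta j - beta' j) k = phase beta k - phase beta' k.
Proof.
by rewrite /phase -mulrBr -sumrB; congr (_ * _); apply: eq_bigr => j _; rewrite intrB mulrBl.
Qed.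

Definition succ_at (i : 'I_n) (k : {ffun 'I_n -> 'I_p}) : {ffun 'I_n -> 'I_p} :=
  [ffun j => if j == i then ordS (k j) else k j].

Lemma succ_at_inj i : injective (succ_at i).
Proof.
move=> k k' /ffunP eq_k; apply/ffunP => j; have := eq_k j; rewrite !ffunE.
by case: eqP => _ //; apply: ordS_inj.
Qed.

Lemma phase_succ_at beta i k : exists m : int,
  phase beta (succ_at i k) = phase beta k + 2 * pi * (beta i)%:~R / p%:R + m%:~R * (2 * pi).
Proof.
have pR : p%:R != 0 :> R by rewrite pnatr_eq0 -lt0n ltnW.
have split_i k' : phase beta k' =
    2 * pi * \sum_(j < n | j != i) (beta j)%:~R * ((k' j)%:R / p%:R)
    + 2 * pi * ((beta i)%:~R * ((k' i)%:R / p%:R)).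
  by rewrite /phase (bigD1 i) //= mulrDr addrC.
have eq_off : \sum_(j < n | j != i) (beta j)%:~R * ((succ_at i k j)%:R / p%:R) =
              \sum_(j < n | j != i) (beta j)%:~R * ((k j)%:R / p%:R) :> R.
  by apply: eq_bigr => j /negbTE ji; rewrite ffunE ji.
rewrite !split_i eq_off ffunE eqxx /=.
have [lt_p|] := ltnP (k i).+1 p.
  by exists 0; rewrite modn_small // -natr1; field.
move=> p_le; have ki : (k i).+1 = p by apply/eqP; rewrite eqn_leq p_le ltn_ord.
exists (- beta i); rewrite ki modnn.
have -> : (k i)%:R = p%:R - 1 :> R by rewrite -[in RHS]ki -natr1 addrK.
by rewrite intrN; field.
Qed.

Lemma phase_sums_eq0 beta i : ~~ (p%:Z %| beta i)%Z -> forall theta : R,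
  \sum_k cos (theta + phase beta k) = 0 /\ \sum_k sin (theta + phase beta k) = 0.
Proof.
move=> p_ndvd theta; pose phi : R := 2 * pi * (beta i)%:~R / p%:R.
have shift_inv (f : R -> R) : (forall (m : int) x, f (x + m%:~R * (2 * pi)) = f x) ->
    \sum_k f (theta + phase beta k) = \sum_k f (theta + phase beta k + phi).
  move=> f_per; rewrite (reindex_inj (@succ_at_inj i)); apply: eq_bigr => k _.
  by have [m ->] := phase_succ_at beta i k; rewrite !addrA f_per.
apply: (rotation_fixed_eq0 (cos2Dsin2 phi)).
- by apply: cos_2pi_frac_neq1 => //; apply: ltnW.
- rewrite [LHS](shift_inv _ (@cosDz R)) !mulr_suml -sumrB.
  by apply: eq_bigr => k _; rewrite cosD.
- rewrite [LHS](shift_inv _ (@sinDz R)) !mulr_suml -big_split.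
  by apply: eq_bigr => k _; rewrite sinD.
Qed.

Lemma sum_one_sub_cos_phase gamma i : ~~ (p%:Z %| gamma i)%Z ->
  \sum_(k : {ffun 'I_n -> 'I_p}) (1 - cos (phase gamma k)) = (p ^ n)%:R.
Proof.
move=> p_ndvd; have [sum_cos _] := phase_sums_eq0 p_ndvd 0.
under eq_bigr => k _ do rewrite -[phase gamma k]add0r.
by rewrite sumrB sum_cos subr0 sumr_const card_ffun !card_ord.
Qed.

Definition grid_origin : {ffun 'I_n -> 'I_p} := [ffun => Ordinal (ltnW p_gt1)].

Lemma phase_origin gamma : phase gamma grid_origin = 0.
Proof. by rewrite /phase big1 ?mulr0 // => j _; rewrite ffunE mul0r mulr0. Qed.

End Phase.

Lemma weighted_sum_eq0_nonpos (R : realDomainType) (T : finType) (k0 : T) (w G : T -> R) :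
  (forall k, 0 <= w k) -> w k0 = 0 -> \sum_k w k != 0 -> \sum_k w k * G k = 0 ->
  exists k, k != k0 /\ G k <= 0.
Proof.
move=> w_ge0 w_k0 sum_w sum_wG.
have [k /andP [k_neq Gk]|G_pos] := pickP (fun k => (k != k0) && (G k <= 0)).
  by exists k.
have G_gt0 k : k != k0 -> 0 < G k.
  by move=> k_neq; move: (G_pos k) => /= /negbT; rewrite k_neq ltNge.
have wG_ge0 k : true -> 0 <= w k * G k.
  by move=> _; have [->|/G_gt0/ltW] := eqVneq k k0; [rewrite w_k0 mul0r | apply: mulr_ge0].
case/negP: sum_w; apply/eqP/big1 => k _.
have [->//|/G_gt0 Gk] := eqVneq k k0.
by move: (@psumr_eq0P _ _ _ _ wG_ge0 sum_wG k isT) => /eqP; rewrite mulf_eq0 (gt_eqF Gk) orbF => /eqP.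
Qed.

Section GridAverage.
Variables (R : realType) (n p : nat) (S : seq (n.-tuple nat)) (a b : n.-tuple nat -> R).
Hypothesis p_gt1 : (1 < p)%N.

Definition grid_point (z : 'I_n -> R) (k : {ffun 'I_n -> 'I_p}) : 'I_n -> R :=
  fun j => z j + (k j)%:R / p%:R.

Definition freq (al : n.-tuple nat) : 'I_n -> int := fun j => (tnth al j)%:Z.

Lemma one_sub_cos_harmonic (A B th ph psi : R) :
  (1 - cos psi) * (A * cos (th + ph) + B * sin (th + ph)) =
  A * cos (th + ph) + B * sin (th + ph)
  - A / 2 * (cos (th + (ph + psi)) + cos (th + (ph - psi)))
  - B / 2 * (sin (th + (ph + psi)) + sin (th + (ph - psi))).
Proof. by rewrite !addrA !cosD !sinD cosN sinN; field. Qed.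

Lemma grid_average_eq0 (z : 'I_n -> R) (gamma : 'I_n -> int) :
  (forall al, al \in S ->
     [/\ exists i, ~~ (p%:Z %| freq al i)%Z,
         exists i, ~~ (p%:Z %| freq al i + gamma i)%Z &
         exists i, ~~ (p%:Z %| freq al i - gamma i)%Z]) ->
  \sum_k (1 - cos (phase R gamma k)) * trig_poly S a b (grid_point z k) = 0.
Proof.
move=> S_avoid; under eq_bigr => k _ do rewrite mulr_sumr.
rewrite exchange_big big_seq big1 // => al /S_avoid [[i1 h1] [i2 h2] [i3 h3]].
pose th : R := 2 * pi * \sum_j (tnth al j)%:R * z j.
have expand k : 2 * pi * \sum_j (tnth al j)%:R * grid_point z k j = th + phase R (freq al) k.
  rewrite /th /phase -mulrDr -big_split; congr (_ * _); apply: eq_bigr => j _.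
  by rewrite /grid_point /freq -pmulrn mulrDr.
under eq_bigr => k _ do rewrite !expand one_sub_cos_harmonic -phaseD -phaseB.
have [c1 s1] := phase_sums_eq0 p_gt1 h1 th.
have [c2 s2] := phase_sums_eq0 (beta := fun j => freq al j + gamma j) p_gt1 h2 th.
have [c3 s3] := phase_sums_eq0 (beta := fun j => freq al j - gamma j) p_gt1 h3 th.
rewrite !sumrB !big_split /= -!mulr_sumr !big_split /= c1 s1 c2 s2 c3 s3; ring.
Qed.

Lemma grid_sign_change (z : 'I_n -> R) (gamma : 'I_n -> int) i0 :
  ~~ (p%:Z %| gamma i0)%Z ->
  (forall al, al \in S ->
     [/\ exists i, ~~ (p%:Z %| freq al i)%Z,
         exists i, ~~ (p%:Z %| freq al i + gamma i)%Z &
         exists i, ~~ (p%:Z %| freq al i - gamma i)%Z]) ->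
  exists k1 k2, [/\ k1 != grid_origin n p_gt1, k2 != grid_origin n p_gt1,
    0 <= trig_poly S a b (grid_point z k1) & trig_poly S a b (grid_point z k2) <= 0].
Proof.
move=> gamma_i0 S_avoid.
pose w (k : {ffun 'I_n -> 'I_p}) := 1 - cos (phase R gamma k).
pose f k := trig_poly S a b (grid_point z k).
have w_ge0 k : 0 <= w k by rewrite subr_ge0 cos_le1.
have w_origin : w (grid_origin n p_gt1) = 0 by rewrite /w phase_origin cos0 subrr.
have sum_w : \sum_k w k != 0.
  by rewrite (sum_one_sub_cos_phase R p_gt1 gamma_i0) pnatr_eq0 -lt0n expn_gt0 ltnW.
have avg : \sum_k w k * f k = 0 by apply: grid_average_eq0.
have [k2 [k2_neq f_k2]] := weighted_sum_eq0_nonpos w_ge0 w_origin sum_w avg.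
have [k1 [k1_neq f_k1]] : exists k, k != grid_origin n p_gt1 /\ - f k <= 0.
  apply: weighted_sum_eq0_nonpos w_ge0 w_origin sum_w _.
  by rewrite (eq_bigr _ (fun k _ => mulrN (w k) (f k))) sumrN avg oppr0.
by exists k1, k2; split => //; rewrite -oppr_le0.
Qed.

End GridAverage.

Section Boxes.
Variables (R : realType) (n : nat).

Definition box (lo hi v : 'I_n -> R) : Prop := forall j, lo j <= v j <= hi j.

Definition slab (e : R) (i : 'I_n) : ('I_n -> R) -> Prop :=
  box (fun j => if j == i then e else 0) (fun j => if j == i then 1 - e else 1).

Lemma slabP e i v : 0 <= e ->
  slab e i v <-> (forall j, 0 <= v j <= 1) /\ e <= v i <= 1 - e.
Proof.
move=> e_ge0; split => [v_in|[v01 vi] j].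
  split; last by have := v_in i; rewrite eqxx.
  by move=> j; have := v_in j; case: eqP => _ // /andP [? ?]; apply/andP; split; lra.
by case: eqP => [->//|_]; apply: v01.
Qed.

Definition line_continuous (G : ('I_n -> R) -> R) : Prop :=
  forall v w : 'I_n -> R, continuous (fun s : R => G (fun j => v j + s * w j)).

Lemma box_segment lo hi v v' c : box lo hi v -> box lo hi v' -> 0 <= c <= 1 ->
  box lo hi (fun j => v j + c * (v' j - v j)).
Proof.
move=> v_in v'_in /andP [c_ge0 c_le1] j.
move: (v_in j) (v'_in j) => /andP [? ?] /andP [? ?]; apply/andP; split; nra.
Qed.

Lemma box_ivt G lo hi v v' : line_continuous G -> box lo hi v -> box lo hi v' ->
  G v <= 0 -> 0 <= G v' -> exists2 u, box lo hi u & G u = 0.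
Proof.
move=> G_cont v_in v'_in Gv Gv'.
pose h s := G (fun j => v j + s * (v' j - v j)).
have h0 : h 0 = G v by congr G; apply/funext => j; rewrite mul0r addr0.
have h1 : h 1 = G v' by congr G; apply/funext => j; rewrite mul1r addrC subrK.
have [|c c01 hc] := @IVT R h 0 1 0 ler01 (continuous_subspaceT (G_cont _ _)).
  by rewrite h0 h1 ge_min le_max Gv Gv' orbT.
by exists (fun j => v j + c * (v' j - v j)) => //; apply: box_segment; move: c01; rewrite in_itv.
Qed.

Lemma slab_ivt G e i1 i2 v1 v2 : 0 <= e -> line_continuous G ->
  slab e i1 v1 -> slab e i2 v2 -> G v2 <= 0 -> 0 <= G v1 ->
  exists i u, slab e i u /\ G u = 0.
Proof.
move=> e_ge0 G_cont v1_in v2_in Gv2 Gv1.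
pose w j := if j == i2 then v2 j else v1 j.
have /(slabP _ _ e_ge0) [v1_01 v1_i1] := v1_in.
have /(slabP _ _ e_ge0) [v2_01 v2_i2] := v2_in.
have w01 j : 0 <= w j <= 1 by rewrite /w; case: ifP.
have w_in1 : slab e i1 w by apply/(slabP _ _ e_ge0); split => //; rewrite /w; case: eqP => [->|].
have w_in2 : slab e i2 w by apply/(slabP _ _ e_ge0); split => //; rewrite /w eqxx.
have [Gw|Gw] := lerP 0 (G w).
  have [u] := box_ivt G_cont v2_in w_in2 Gv2 Gw.
  by exists i2, u.
have [u] := box_ivt G_cont w_in1 v1_in (ltW Gw) Gv1.
by exists i1, u.
Qed.

End Boxes.

Section TorusDistance.
Context {R : realType}.

Definition frac (t : R) : R := t - (Num.floor t)%:~R.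

Lemma frac_ge0 t : 0 <= frac t.
Proof. by rewrite subr_ge0 Num.Theory.floor_le. Qed.

Lemma frac_lt1 t : frac t < 1.
Proof. by have := Num.Theory.floorD1_gt t; rewrite /frac intrD; lra. Qed.

Lemma circle_dist_ge0 (s t : R) : 0 <= s < 1 -> 0 <= t < 1 ->
  0 <= Num.min `|s - t| (1 - `|s - t|).
Proof.
move=> /andP [? ?] /andP [? ?]; rewrite le_min normr_ge0 subr_ge0 ler_norml.
by apply/andP; split; lra.
Qed.

Lemma min_norm_le (d e : R) : `|d| <= e \/ 1 - e <= `|d| ->
  Num.min `|d| (1 - `|d|) <= e.
Proof. by rewrite ge_min => -[?|?]; apply/orP; [left | right; lra]. Qed.

Lemma circle_dist_antipode_le (s v e : R) : 0 <= s < 1 -> e <= v <= 1 - e ->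
  Num.min `|s - frac (s + 1/2 + v)| (1 - `|s - frac (s + 1/2 + v)|) <= 1/2 - e.
Proof.
move=> /andP [s_ge0 s_lt1] /andP [e_le_v v_le].
have := frac_ge0 (s + 1/2 + v); have := frac_lt1 (s + 1/2 + v).
rewrite /frac; set m := Num.floor _ => ? ?.
have -> : s - (s + 1/2 + v - m%:~R) = m%:~R - 1/2 - v by ring.
apply: min_norm_le; have [m_le0|m_gt0] := lerP m 0.
  by right; move: m_le0; rewrite -(lerz0 R) ler_normr => ?; apply/orP; right; lra.
have [m_le1|m_gt1] := lerP m 1.
  have -> : m = 1 by lia.
  by left; rewrite ler_norml; apply/andP; split; lra.
have m_ge2 : 2 <= m%:~R :> R by rewrite (_ : 2 = 2%:~R) // ler_int; lia.
by right; rewrite ler_normr; apply/orP; left; lra.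
Qed.

Lemma sqr_circle_dist_antipode_le (s v e : R) : 0 <= s < 1 -> e <= v <= 1 - e ->
  Num.min `|s - frac (s + 1/2 + v)| (1 - `|s - frac (s + 1/2 + v)|) ^+ 2 <= (1/2 - e) ^+ 2.
Proof.
move=> s01 v_in; have := circle_dist_antipode_le s01 v_in.
have := circle_dist_ge0 s01 (introT andP (conj (frac_ge0 (s + 1/2 + v)) (frac_lt1 _))).
by move: (Num.min _ _) => c c_ge0 c_le; rewrite !expr2; nra.
Qed.

Lemma torus_dist_antipode_le n (x v : 'I_n -> R) e i :
  in_fund_domain x -> 0 <= e -> slab e i v ->
  torus_dist x (fun j => frac (x j + 1/2 + v j))
    <= Num.sqrt ((n%:R - 1) / 4 + (1/2 - e) ^+ 2).
Proof.
move=> x_in e_ge0 /(slabP _ _ e_ge0) [v01 v_i].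
have x01 j : 0 <= x j < 1 by case: (x_in j) => -> ->.
have n_ge1 : 1 <= n%:R :> R by rewrite ler1n (leq_ltn_trans _ (ltn_ord i)).
rewrite ler_sqrt; last by rewrite addr_ge0 ?sqr_ge0 //; lra.
rewrite (bigD1 i) //= addrC lerD ?sqr_circle_dist_antipode_le //.
have sum_quarter : \sum_(j < n | j != i) (1/4 : R) = (n%:R - 1) / 4.
  have : \sum_(j < n) (1/4 : R) = 1/4 + \sum_(j < n | j != i) 1/4 by rewrite (bigD1 i).
  by rewrite sumr_const card_ord -mulr_natl; lra.
rewrite -sum_quarter; apply: ler_sum => j _.
by rewrite (_ : 1/4 = (1/2 - 0) ^+ 2); [apply: sqr_circle_dist_antipode_le; rewrite ?subr0 | field].
Qed.

Lemma trig_poly_shiftz n (S : seq (n.-tuple nat)) (a b : n.-tuple nat -> R)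
    (m : 'I_n -> int) (u : 'I_n -> R) :
  trig_poly S a b (fun j => u j - (m j)%:~R) = trig_poly S a b u.
Proof.
apply: eq_bigr => al _; set N := \sum_(i < n) ((tnth al i)%:Z * m i)%R.
have -> : 2 * pi * \sum_(i < n) (tnth al i)%:R * (u i - (m i)%:~R) =
          2 * pi * \sum_(i < n) (tnth al i)%:R * u i + (- N)%:~R * (2 * pi) :> R.
  rewrite intrN rmorph_sum /= mulNr [X in _ - X]mulrC -mulrBr -sumrB; congr (_ * _).
  by apply: eq_bigr => i _; rewrite intrM mulrBr.
by rewrite cosDz sinDz.
Qed.

Lemma trig_poly_frac n (S : seq (n.-tuple nat)) (a b : n.-tuple nat -> R) (u : 'I_n -> R) :
  trig_poly S a b (fun j => frac (u j)) = trig_poly S a b u.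
Proof. exact: trig_poly_shiftz. Qed.

End TorusDistance.

Lemma trig_poly_line_continuous (R : realType) n (S : seq (n.-tuple nat))
    (a b : n.-tuple nat -> R) (z : 'I_n -> R) :
  line_continuous (fun v => trig_poly S a b (fun j => z j + v j)).
Proof.
move=> v w; apply: continuous_big => [|al _]; first exact: add_continuous.
pose A : R := 2 * pi * \sum_(i < n) (tnth al i)%:R * (z i + v i).
pose B : R := 2 * pi * \sum_(i < n) (tnth al i)%:R * w i.
have affine s : 2 * pi * \sum_(i < n) (tnth al i)%:R * (z i + (v i + s * w i)) = A + s * B.
  rewrite /A /B mulrCA -mulrDr; congr (_ * _); rewrite mulr_sumr -big_split.
  by apply: eq_bigr => i _ /=; ring.
under eq_fun => s do rewrite affine.
move=> s; have cst (c : R) : {for s, continuous (fun=> c)} by exact: cst_continuous.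
have L_cont : {for s, continuous (fun t : R => A + t * B)}.
  exact: (continuousD (cst A) (continuousM cvg_id (cst B))).
have cos_L : {for s, continuous (fun t : R => cos (A + t * B))}.
  exact: (continuous_comp L_cont (@continuous_cos R _)).
have sin_L : {for s, continuous (fun t : R => sin (A + t * B))}.
  exact: (continuous_comp L_cont (@continuous_sin R _)).
exact: (continuousD (continuousM (cst _) cos_L) (continuousM (cst _) sin_L)).
Qed.

Lemma grid_offset_in_slab (R : realType) n p (p_gt1 : (1 < p)%N) (k : {ffun 'I_n -> 'I_p}) :
  k != grid_origin n p_gt1 -> exists i, slab (1 / p%:R : R) i (fun j => (k j)%:R / p%:R).
Proof.
move=> /exists_ffun_neq [i ki]; exists i.
have q_gt0 : 0 < p%:R^-1 :> R by rewrite invr_gt0 ltr0n ltnW.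
have qp : p%:R^-1 * p%:R = 1 :> R by rewrite mulVf ?gt_eqF // -invr_gt0.
have k_lt j : (k j)%:R + 1 <= p%:R :> R by rewrite natr1 ler_nat ltn_ord.
have k_ge0 j : 0 <= (k j)%:R :> R by rewrite ler0n.
apply/slabP; first by rewrite mul1r ltW.
rewrite mul1r; split => [j|].
  by have := k_lt j; have := k_ge0 j => ? ?; apply/andP; split; nra.
have k_ge1 : 1 <= (k i)%:R :> R.
  by rewrite ler1n lt0n; apply: contra ki => /eqP ki0; apply/eqP/val_inj; rewrite ffunE.
by have := k_lt i => ?; apply/andP; split; nra.
Qed.

Theorem theorem1p2 (R : realType) (n p : nat) (S : seq (n.-tuple nat))
  (hn : (1 <= n)%N) (hp : prime p) (hp3 : (3 <= p)%N)
  (huniq : uniq S)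
  (hS0 : forall alpha, alpha \in S -> alpha != [tuple of nseq n 0%N])
  (hSp : forall alpha, alpha \in S -> exists i : 'I_n, ~~ (p %| tnth alpha i)%N)
  (hcard : (size S)%:R <= (p%:R ^+ n) / 2 - 1 :> R)
  (a b : n.-tuple nat -> R) (x : 'I_n -> R) (hx : in_fund_domain x) :
  let r : R := Num.sqrt ((n%:R - 1) / 4 + ((p%:R - 2) / (2 * p%:R)) ^+ 2) in
  exists y : 'I_n -> R,
    [/\ in_fund_domain y, torus_dist x y <= r & trig_poly S a b y = 0].
Proof.
move=> r; have p_gt1 : (1 < p)%N by apply: leq_trans hp3.
have p_gt0 : 0 < p%:R :> R by rewrite ltr0n ltnW.
have e_ge0 : 0 <= 1 / p%:R :> R by rewrite ltW // divr_gt0.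
have S_small : (2 * size S + 2 <= p ^ n)%N by rewrite -(ler_nat R) natrD natrM natrX; lra.
have [gamma [[i0 gamma_i0] S_avoid]] := exists_avoiding_shift p_gt1 S_small.
pose z j := x j + 1/2.
have [k1 [k2 [k1_neq k2_neq f_k1 f_k2]]] := grid_sign_change a b p_gt1 z gamma_i0
  (fun al al_S => And3 (hSp al al_S) (S_avoid al al_S).1 (S_avoid al al_S).2).
have [i1 k1_in] := grid_offset_in_slab R k1_neq.
have [i2 k2_in] := grid_offset_in_slab R k2_neq.
have [i [u [u_in fu0]]] :=
  slab_ivt e_ge0 (@trig_poly_line_continuous R n S a b z) k1_in k2_in f_k2 f_k1.
exists (fun j => frac (x j + 1/2 + u j)); split.
- by move=> j; rewrite frac_ge0 frac_lt1.
- rewrite /r (_ : (p%:R - 2) / (2 * p%:R) = 1/2 - 1/p%:R); last by field; rewrite gt_eqF.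
  exact: torus_dist_antipode_le e_ge0 u_in.
- by rewrite trig_poly_frac.
Qed.
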